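(* Let $L$ be a Lie algebra over a field $F$ satisfying an identity \[f(x_0,x_1,\dots,x_{n-1})=[x_0,x_1,\dots,x_{n-1}]+\sum_{1\ne\sigma\in S_{n-1}}\alpha_\sigma[x_0,x_{\sigma(1)},\dots,x_{\sigma(n-1)}]=0,\quad\alpha_\sigma\in F,\] where $n$ is the minimal degree of an identity satisfied by $L$. Let $f_1(x_0,x_2,\dots,x_{n-1})=[x_0,x_2,\dots,x_{n-1}]+\sum_{1\ne\sigma\in S_{n-1},\,\sigma(1)=1}\alpha_\sigma[x_0,x_{\sigma(2)},\dots,x_{\sigma(n-1)}]$. Then for arbitrary elements $a,b_2,\dots,b_{n-1},c\in\tilde L=L\otimes_FE$, \[[f_1(a,b_2,\dots,b_{n-1}),c]\in\sum F[a,b_{i_2},\dots,[b_{i_k},c],\dots,b_{i_{n-1}}],\] where the sum runs over all permutations $i_2,\dots,i_{n-1}$ of $2,\dots,n-1$ and all positions $2\le k\le n-1$.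
   Context: Commutators are left-normed: $[a,b,c,\dots]=[\cdots[[a,b],c],\dots]$. $E$ is the commutative associative $F$-algebra without unit generated by $e_1,e_2,\dots$ with relations $e_i^2=0$, and $\tilde L=L\otimes_FE$ with $[x\otimes\alpha,y\otimes\beta]=[x,y]\otimes\alpha\beta$. *)

From HB Require Import structures.
From mathcomp Require Import all_boot all_order all_algebra.
From mathcomp Require Import fingroup perm finmap.
Set Implicit Arguments.
Unset Strict Implicit.
Unset Printing Implicit Defensive.
Import Order.TTheory GRing.Theory.
Local Open Scope ring_scope.


Definition is_lie (F : fieldType) (L : lmodType F) (br : L -> L -> L) : Prop :=
  [/\ (forall (a : F) x y z, br (a *: x + y) z = a *: br x z + br y z),
      (forall (a : F) x y z, br x (a *: y + z) = a *: br x y + br x z),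
      (forall x, br x x = 0)
    & (forall x y z, br (br x y) z + br (br y z) x + br (br z x) y = 0)].

Definition lcomm (T : Type) (br : T -> T -> T) (x0 : T) (s : seq T) : T :=
  foldl br x0 s.

Inductive lterm : Type :=
| LVar of nat
| LBr of lterm & lterm.

Fixpoint leval (T : Type) (br : T -> T -> T) (v : nat -> T) (t : lterm) : T :=
  match t with
  | LVar i => v i
  | LBr t1 t2 => br (leval br v t1) (leval br v t2)
  end.

Fixpoint lsize (t : lterm) : nat :=
  match t with
  | LVar _ => 1
  | LBr t1 t2 => lsize t1 + lsize t2
  end.

Definition lpoly (F : fieldType) := seq (F * lterm).

Definition peval (F : fieldType) (L : lmodType F) (br : L -> L -> L)
  (p : lpoly F) (v : nat -> L) : L :=
  \sum_(q <- p) q.1 *: leval br v q.2.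

Definition pdeg (F : fieldType) (p : lpoly F) : nat :=
  \max_(q <- p | q.1 != 0) lsize q.2.

Definition is_identity (F : fieldType) (L : lmodType F) (br : L -> L -> L)
  (p : lpoly F) : Prop :=
  forall v : nat -> L, peval br p v = 0.

(* p is a nonzero Lie polynomial, i.e. not an identity of every Lie algebra
   over F (equivalently: p is nonzero in the free Lie algebra) *)
Definition nontrivial_lpoly (F : fieldType) (p : lpoly F) : Prop :=
  exists (M : lmodType F) (brM : M -> M -> M), is_lie brM /\ ~ is_identity brM p.

Definition no_identity_below (F : fieldType) (L : lmodType F) (br : L -> L -> L)
  (n : nat) : Prop :=
  forall p : lpoly F, (pdeg p < n)%N -> nontrivial_lpoly p -> ~ is_identity br p.

(* E has the F-basis e_S = prod_{i in S} e_i, S a nonempty finite set of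
   indices, with e_S e_T = e_{S u T} if S, T disjoint and 0 otherwise.
   Hence an element of L~ = L (x) E is uniquely sum_S u(S) (x) e_S, i.e. a
   finitely supported function u from finite sets of indices to L with
   u(emptyset) = 0. *)
Definition tilde (L : Type) := {fset nat} -> L.

Definition in_tilde (F : fieldType) (L : lmodType F) (u : tilde L) : Prop :=
  u fset0 = 0 /\ exists s : seq {fset nat}, forall S, S \notin s -> u S = 0.

Definition zeroT (F : fieldType) (L : lmodType F) : tilde L := fun _ => 0.
Definition addT (F : fieldType) (L : lmodType F) (u v : tilde L) : tilde L :=
  fun S => u S + v S.
Definition scaleT (F : fieldType) (L : lmodType F) (a : F) (u : tilde L) : tilde L :=
  fun S => a *: u S.

(* [x (x) e_T, y (x) e_U] = [x,y] (x) e_T e_U, extended bilinearly: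
   the e_S-coefficient of [u,v] is sum over T subset S of [u(T), v(S\T)] *)
Definition brT (F : fieldType) (L : lmodType F) (br : L -> L -> L)
  (u v : tilde L) : tilde L :=
  fun S => \sum_(T <- fpowerset S) br (u T) (v (S `\` T)%fset).

(* Here n = m.+2.  Variables x_1, ..., x_{n-1} are indexed by 'I_(m.+1)
   (ord0 <-> x_1), and S_{n-1} = 'S_(m.+1).
   f(x_0, x_1..x_{n-1}) = sum_sigma alpha_sigma [x_0, x_sigma(1), ..., x_sigma(n-1)]
   (with alpha_1 = 1 assumed separately). *)
Definition fpoly (F : fieldType) (L : lmodType F) (br : L -> L -> L) (m : nat)
  (alpha : 'S_(m.+1) -> F) (x0 : L) (x : 'I_(m.+1) -> L) : L :=
  \sum_(s : 'S_(m.+1)) alpha s *: lcomm br x0 [seq x (s i) | i <- enum 'I_(m.+1)].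

(* extend b : 'I_m -> L~ (the variables x_2..x_{n-1}) to 'I_(m.+1) with a
   dummy value at x_1 (never used below, since sigma(1) = 1) *)
Definition extb (F : fieldType) (L : lmodType F) (m : nat) (b : 'I_m -> tilde L)
  (j : 'I_(m.+1)) : tilde L :=
  if unlift ord0 j is Some i then b i else zeroT L.

Definition f1T (F : fieldType) (L : lmodType F) (br : L -> L -> L) (m : nat)
  (alpha : 'S_(m.+1) -> F) (a : tilde L) (b : 'I_m -> tilde L) : tilde L :=
  \big[@addT F L/zeroT L]_(s : 'S_(m.+1) | s ord0 == ord0)
     scaleT (alpha s)
       (lcomm (brT br) a [seq extb b (s (lift ord0 i)) | i <- enum 'I_m]).

Definition inner_term (F : fieldType) (L : lmodType F) (br : L -> L -> L) (m : nat)
  (a : tilde L) (b : 'I_m -> tilde L) (c : tilde L) (t : 'S_m) (k : 'I_m) : tilde L :=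
  lcomm (brT br) a
    [seq (if i == k then brT br (b (t i)) c else b (t i)) | i <- enum 'I_m].

From HB Require Import structures.
From mathcomp Require Import all_boot all_order all_algebra.
From mathcomp Require Import fingroup perm finmap.
From Stdlib Require Import FunctionalExtensionality.
From mathcomp Require Import zify.
Set Implicit Arguments.
Unset Strict Implicit.
Unset Printing Implicit Defensive.
Import GRing.Theory.
Local Open Scope ring_scope.

(* The e_S-coefficient of a left-normed commutator [u_0, ..., u_k] in L~ is the
   sum, over ordered decompositions S = P_0 + ... + P_k into disjoint blocks, of
   [u_0(P_0), ..., u_k(P_k)] computed in L.  Permuting the blocks together with
   the variables shows that every identity of L which is a linear combination of
   left-normed commutators in permuted variables (anticommutativity, Jacobi,
   f = 0) still holds in L~.

   Substitute x_0 := c, x_1 := a, x_(i+1) := b_i in f = 0.  As [c, a] = -[a, c],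
   the terms with sigma(1) = 1 add up to sum alpha_sigma [[a, c], b_..], which
   thus equals the sum of the remaining terms [c, b_.., a, b_..] =
   -[[a, [c, b_..]], b_..].  By Jacobi, both [a, [c, b_u]] and the defect
   [[a, b_u], c] - [[a, c], b_u] are combinations of the commutators
   [a, b_.., [b_j, c], .., b_..], and [f_1(a, b), c] is the sum over sigma(1) = 1
   of alpha_sigma ([[a, c], b_..] + defect). *)

Fixpoint fsplits (k : nat) (S : {fset nat}) : seq (seq {fset nat}) :=
  match k with
  | 0 => [:: [:: S]]
  | k'.+1 => [seq rcons P (S `\` T)%fset | T <- fpowerset S, P <- fsplits k' T]
  end.

Definition is_fsplit (k : nat) (S : {fset nat}) (P : seq {fset nat}) : Prop :=
  size P = k.+1 /\ forall x : nat, count (fun A : {fset nat} => x \in A) P = (x \in S).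

Lemma mem_fsplits k S P : P \in fsplits k S <-> is_fsplit k S P.
Proof.
elim: k S P => [|k IH] S P /=.
  rewrite inE; split.
    by move/eqP->; split => // x /=; rewrite addn0.
  case=> hs hc; case: P hs hc => [|A [|]] //= _ hc.
  apply/eqP; congr [:: _]; apply/fsetP => x.
  by move: (hc x); rewrite addn0; case: (x \in A); case: (x \in S).
split.
  case/allpairsPdep => T [P0 [hT hP0 ->]].
  move: hT; rewrite fpowersetE => /fsubsetP hT.
  have [hs hc] := (IH _ _).1 hP0.
  split; first by rewrite size_rcons hs.
  move=> x; rewrite -cats1 count_cat /= addn0 hc in_fsetD.
  by case hx: (x \in T); [rewrite (hT _ hx) | case: (x \in S)].
case=> hs hc.
case/lastP: P hs hc => [|P0 X] //; rewrite size_rcons => -[hs] hc.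
have hc' x : count (fun A : {fset nat} => x \in A) P0 + (x \in X) = (x \in S).
  by move: (hc x); rewrite -cats1 count_cat /= addn0.
have XS : (X `<=` S)%fset.
  apply/fsubsetP => x hx; move: (hc' x); rewrite hx.
  by case: (x \in S) => // /eqP; rewrite addn_eq0 andbF.
apply/allpairsPdep; exists (S `\` X)%fset, P0; split.
- by rewrite fpowersetE fsubsetDl.
- apply (IH _ _).2; split => //.
  move=> x; move: (hc' x); rewrite in_fsetD.
  by case: (x \in X); case: (x \in S) => /=; lia.
- by rewrite fsetDK.
Qed.

Lemma size_mem_fsplits k S P : P \in fsplits k S -> size P = k.+1.
Proof. by case/mem_fsplits. Qed.

Lemma fsplits_uniq k S : uniq (fsplits k S).
Proof.
elim: k S => [|k IH] S //=.
apply: allpairs_uniq_dep; first exact: fset_uniq.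
  by move=> T _; exact: IH.
move=> [T1 P1] [T2 P2] /allpairsPdep [T1' [Q1 [h1 _ [e1 _]]]]
  /allpairsPdep [T2' [Q2 [h2 _ [e2 _]]]] /=; subst T1' T2'.
move=> /eqP; rewrite eqseq_rcons => /andP [/eqP -> /eqP eT].
move: h1 h2; rewrite !fpowersetE => h1 h2.
by rewrite -(fsetDK h1) eT (fsetDK h2).
Qed.

Definition reorder (idx : seq nat) (P : seq {fset nat}) : seq {fset nat} :=
  [seq nth fset0 P j | j <- idx].

Section Reorder.
Variables (k : nat) (S : {fset nat}) (idx : seq nat).
Hypothesis idx_perm : perm_eq idx (iota 0 k.+1).

Lemma is_fsplit_reorder P : is_fsplit k S P -> is_fsplit k S (reorder idx P).
Proof.
move=> [hs hc].
have pe : perm_eq (reorder idx P) P.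
  by rewrite -{2}(mkseq_nth fset0 P) /mkseq hs /reorder perm_map.
split; first by rewrite (perm_size pe).
by move=> x; rewrite -hc; move/seq.permP: pe; apply.
Qed.

Lemma reorder_inj : {in fsplits k S &, injective (reorder idx)}.
Proof.
move=> P Q /size_mem_fsplits hP /size_mem_fsplits hQ /eq_in_map e.
apply: (@eq_from_nth _ fset0); first by rewrite hP hQ.
move=> j; rewrite hP => hj; apply: e.
by rewrite (perm_mem idx_perm) mem_iota.
Qed.

Lemma perm_fsplits_reorder : perm_eq (map (reorder idx) (fsplits k S)) (fsplits k S).
Proof.
have U : uniq (map (reorder idx) (fsplits k S)).
  by rewrite (map_inj_in_uniq reorder_inj) fsplits_uniq.
apply: uniq_perm => //; first exact: fsplits_uniq.
have sub : {subset map (reorder idx) (fsplits k S) <= fsplits k S}.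
  move=> Q /mapP [P /mem_fsplits hP ->]; exact/mem_fsplits/is_fsplit_reorder.
by have [] := uniq_min_size U sub (eq_leq (esym (size_map _ _))).
Qed.

Lemma big_fsplits_reorder (V : nmodType) (h : seq {fset nat} -> V) :
  \sum_(P <- fsplits k S) h P = \sum_(P <- fsplits k S) h (reorder idx P).
Proof.
rewrite -(big_map (reorder idx) xpredT h).
by apply: perm_big; rewrite perm_sym perm_fsplits_reorder.
Qed.
End Reorder.

Definition lcomm_seq (T : Type) (br : T -> T -> T) (x0 : T) (l : seq T) : T :=
  lcomm br (head x0 l) (behead l).

Lemma lcomm_rcons (T : Type) (br : T -> T -> T) z w x :
  lcomm br z (rcons w x) = br (lcomm br z w) x.
Proof. by rewrite /lcomm foldl_rcons. Qed.

Lemma lcomm_cat (T : Type) (br : T -> T -> T) z w1 w2 :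
  lcomm br z (w1 ++ w2) = lcomm br (lcomm br z w1) w2.
Proof. by rewrite /lcomm foldl_cat. Qed.

Lemma perm_map_enum n (s : 'S_n) : perm_eq [seq s i | i <- enum 'I_n] (enum 'I_n).
Proof.
apply: uniq_perm; first by rewrite map_inj_uniq ?enum_uniq //; exact: perm_inj.
  exact: enum_uniq.
move=> x; rewrite mem_enum; apply/mapP; exists ((s^-1)%g x); first by rewrite mem_enum.
by rewrite permKV.
Qed.

Section LieAlgebra.
Variables (F : fieldType) (L : lmodType F) (br : L -> L -> L).
Hypothesis lieL : is_lie br.

Lemma brDl x y z : br (x + y) z = br x z + br y z.
Proof. by case: lieL => h _ _ _; have := h 1 x y z; rewrite !scale1r. Qed.
Lemma brDr x y z : br x (y + z) = br x y + br x z.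
Proof. by case: lieL => _ h _ _; have := h 1 x y z; rewrite !scale1r. Qed.
Lemma br0l z : br 0 z = 0.
Proof. by apply: (addIr (br 0 z)); rewrite add0r -brDl addr0. Qed.
Lemma br0r z : br z 0 = 0.
Proof. by apply: (addIr (br z 0)); rewrite add0r -brDr addr0. Qed.
Lemma brZl a x z : br (a *: x) z = a *: br x z.
Proof. by case: lieL => h _ _ _; have := h a x 0 z; rewrite !addr0 br0l addr0. Qed.
Lemma brZr a x z : br z (a *: x) = a *: br z x.
Proof. by case: lieL => _ h _ _; have := h a z x 0; rewrite !addr0 br0r addr0. Qed.
Lemma brNl x z : br (- x) z = - br x z.
Proof. by rewrite -scaleN1r brZl scaleN1r. Qed.
Lemma br_anti x y : br x y = - br y x.
Proof.
case: lieL => _ _ h _; have := h (x + y).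
by rewrite brDl !brDr !h add0r addr0 => /eqP; rewrite addr_eq0 => /eqP.
Qed.
Lemma br_jacobi x y z : br (br x y) z + br (br y z) x + br (br z x) y = 0.
Proof. by case: lieL. Qed.

Lemma br_suml I (r : seq I) (P : pred I) (G : I -> L) z :
  br (\sum_(i <- r | P i) G i) z = \sum_(i <- r | P i) br (G i) z.
Proof. exact: (big_morph (fun u => br u z) (fun u v => brDl u v z) (br0l z)). Qed.

Local Notation brT := (brT br).

Lemma brTDl u v w : brT (addT u v) w = addT (brT u w) (brT v w).
Proof.
apply: functional_extensionality => S; rewrite /brT /addT -big_split /=.
by apply: eq_bigr => T _; rewrite brDl.
Qed.
Lemma brTZl a u w : brT (scaleT a u) w = scaleT a (brT u w).
Proof.
apply: functional_extensionality => S; rewrite /brT /scaleT scaler_sumr.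
by apply: eq_bigr => T _; rewrite brZl.
Qed.
Lemma brT0l w : brT (zeroT L) w = zeroT L.
Proof.
apply: functional_extensionality => S; rewrite /brT /zeroT big1 // => T _.
exact: br0l.
Qed.
Lemma brTZr a u w : brT w (scaleT a u) = scaleT a (brT w u).
Proof.
apply: functional_extensionality => S; rewrite /brT /scaleT scaler_sumr.
by apply: eq_bigr => T _; rewrite brZr.
Qed.

Lemma big_addT_apply I (r : seq I) (P : pred I) (G : I -> tilde L) S :
  (\big[@addT F L/zeroT L]_(i <- r | P i) G i) S = \sum_(i <- r | P i) G i S.
Proof.
elim: r => [|i r IH]; first by rewrite !big_nil.
by rewrite !big_cons; case: (P i); rewrite -IH.
Qed.

Lemma brT_suml I (r : seq I) (P : pred I) (G : I -> tilde L) w :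
  brT (\big[@addT F L/zeroT L]_(i <- r | P i) G i) w =
  \big[@addT F L/zeroT L]_(i <- r | P i) brT (G i) w.
Proof. exact: (big_morph (fun u => brT u w) (fun u v => brTDl u v w) (brT0l w)). Qed.

Lemma lcomm_brTDl z1 z2 w : lcomm brT (addT z1 z2) w = addT (lcomm brT z1 w) (lcomm brT z2 w).
Proof. by elim: w z1 z2 => //= x w IH z1 z2; rewrite brTDl IH. Qed.
Lemma lcomm_brTZl a z w : lcomm brT (scaleT a z) w = scaleT a (lcomm brT z w).
Proof. by elim: w z => //= x w IH z; rewrite brTZl IH. Qed.
Lemma lcomm_brT0l w : lcomm brT (zeroT L) w = zeroT L.
Proof. by elim: w => //= x w IH; rewrite brT0l IH. Qed.

Lemma lcomm_brT_expand x0 xs S :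
  lcomm brT x0 xs S =
  \sum_(P <- fsplits (size xs) S) lcomm_seq br 0 [seq q.1 q.2 | q <- zip (x0 :: xs) P].
Proof.
elim/last_ind: xs S => [|xs y IH] S; first by rewrite /= big_seq1.
rewrite lcomm_rcons /brT size_rcons /= big_allpairs_dep.
apply: eq_bigr => T _; rewrite IH br_suml big_seq [RHS]big_seq.
apply: eq_bigr => P hP; have := size_mem_fsplits hP.
case: P hP => [|p0 P] //= _ [hs].
by rewrite zip_rcons // map_rcons /lcomm_seq /= lcomm_rcons.
Qed.

Lemma lcomm_seq_brT_expand (l : seq (tilde L)) S : (0 < size l)%N ->
  lcomm_seq brT (zeroT L) l S =
  \sum_(P <- fsplits (size l).-1 S) lcomm_seq br 0 [seq q.1 q.2 | q <- zip l P].
Proof. by case: l => // x0 xs _; rewrite /lcomm_seq lcomm_brT_expand. Qed.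

Lemma multilinear_identity_tilde (I : eqType) (r : seq I) (coef : I -> F)
    (idx : I -> seq nat) k (v : seq (tilde L)) :
  {in r, forall i, perm_eq (idx i) (iota 0 k.+1)} ->
  (forall w : seq L, \sum_(i <- r) coef i *: lcomm_seq br 0 [seq nth 0 w j | j <- idx i] = 0) ->
  forall S, \sum_(i <- r) coef i *:
    lcomm_seq brT (zeroT L) [seq nth (zeroT L) v j | j <- idx i] S = 0.
Proof.
move=> idx_perm hw S.
pose wP (P : seq {fset nat}) := [seq nth (zeroT L) v j (nth fset0 P j) | j <- iota 0 k.+1].
have expand i : i \in r -> lcomm_seq brT (zeroT L) [seq nth (zeroT L) v j | j <- idx i] S =
    \sum_(P <- fsplits k S) lcomm_seq br 0 [seq nth 0 (wP P) j | j <- idx i].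
  move=> /idx_perm hp; have hs : size (idx i) = k.+1 by rewrite (perm_size hp) size_iota.
  rewrite lcomm_seq_brT_expand; last by rewrite size_map hs.
  rewrite size_map hs /= (big_fsplits_reorder S hp).
  apply: eq_bigr => P _; congr lcomm_seq.
  rewrite /reorder zip_map -map_comp; apply/eq_in_map => j hj /=.
  have hjk : (j < k.+1)%N by move: hj; rewrite (perm_mem hp) mem_iota.
  by rewrite /wP (nth_map 0) ?size_iota // nth_iota.
rewrite big_seq; under eq_bigr => i hi do rewrite (expand i hi) scaler_sumr.
by rewrite exchange_big /= big1 // => P _; rewrite -big_seq.
Qed.

Lemma brT_anti u v : brT u v = scaleT (-1) (brT v u).
Proof.
apply: functional_extensionality => S.
rewrite /scaleT scaleN1r; apply/eqP; rewrite -addr_eq0; apply/eqP.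
pose r : seq (F * seq nat) := [:: (1, [:: 0; 1]%N); (1, [:: 1; 0]%N)].
have -> : brT u v S + brT v u S =
    \sum_(q <- r) q.1 *: lcomm_seq brT (zeroT L) [seq nth (zeroT L) [:: u; v] j | j <- q.2] S.
  by rewrite !big_cons big_nil /= !scale1r addr0.
apply: (@multilinear_identity_tilde _ r _ snd 1); first exact/allP.
move=> w; rewrite !big_cons big_nil /= !scale1r addr0 /lcomm_seq /=.
by rewrite br_anti addNr.
Qed.

Lemma brT_jacobi z y x :
  brT z (brT y x) = addT (brT (brT z y) x) (scaleT (-1) (brT (brT z x) y)).
Proof.
apply: functional_extensionality => S.
rewrite brT_anti /addT /scaleT !scaleN1r.
pose r : seq (F * seq nat) := [:: (1, [:: 0; 1; 2]%N); (-1, [:: 0; 2; 1]%N); (1, [:: 1; 2; 0]%N)].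
have J : brT (brT z y) x S + (- brT (brT z x) y S + brT (brT y x) z S) =
    \sum_(q <- r) q.1 *: lcomm_seq brT (zeroT L) [seq nth (zeroT L) [:: z; y; x] j | j <- q.2] S.
  by rewrite !big_cons big_nil /= !scale1r scaleN1r addr0.
have jac3 w : \sum_(q <- r) q.1 *: lcomm_seq br 0 [seq nth 0 w j | j <- q.2] = 0.
  rewrite !big_cons big_nil /= !scale1r scaleN1r addr0 /lcomm_seq /=.
  set x0 := w`_0; set x1 := w`_1; set x2 := w`_2.
  have := br_jacobi x1 x2 x0; rewrite (br_anti x2 x0) brNl => <-.
  by rewrite [RHS]addrC (addrC (- _)).
move: J; rewrite (@multilinear_identity_tilde _ r _ snd 2 _ _ jac3); last exact/allP.
by rewrite addrA => /eqP; rewrite addrC addr_eq0 => /eqP ->; rewrite opprK.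
Qed.

Lemma fpoly_tilde (m : nat) (alpha : 'S_(m.+1) -> F) :
  (forall x0 x, fpoly br alpha x0 x = 0) ->
  forall (x0 : tilde L) (x : 'I_(m.+1) -> tilde L) S,
  \sum_(s : 'S_(m.+1)) alpha s *: lcomm brT x0 [seq x (s i) | i <- enum 'I_(m.+1)] S = 0.
Proof.
move=> f_id x0 x S.
pose idx (s : 'S_(m.+1)) := 0%N :: [seq (s i).+1 | i <- enum 'I_(m.+1)].
pose v := x0 :: [seq x i | i <- enum 'I_(m.+1)].
have E (s : 'S_(m.+1)) : lcomm brT x0 [seq x (s i) | i <- enum 'I_(m.+1)] =
    lcomm_seq brT (zeroT L) [seq nth (zeroT L) v j | j <- idx s].
  rewrite /lcomm_seq /= -map_comp; congr lcomm; apply: eq_map => i /=.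
  by rewrite (nth_map ord0) ?size_enum_ord ?ltn_ord // nth_ord_enum.
under eq_bigr => s _ do rewrite E.
apply: (@multilinear_identity_tilde _ _ alpha idx m.+1 v).
  move=> s _; rewrite /idx -[iota 0 _]/(0%N :: iota 1 m.+1) perm_cons.
  rewrite -[1%N]/(1 + 0)%N iotaDl -val_enum_ord -map_comp.
  have -> : [seq (s i).+1 | i <- enum 'I_(m.+1)] =
    [seq (1 + nat_of_ord i)%N | i <- [seq s i | i <- enum 'I_(m.+1)]].
    by elim: (enum _) => //= ? ? ->.
  exact: perm_map (perm_map_enum s).
move=> w; have := f_id (nth 0 w 0) (fun i => nth 0 w i.+1).
by rewrite /fpoly /idx /lcomm_seq /=; under eq_bigr => s _ do rewrite -map_comp.
Qed.
End LieAlgebra.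

Section InnerSpan.
Variables (F : fieldType) (L : lmodType F) (br : L -> L -> L).
Hypothesis lieL : is_lie br.
Local Notation brT := (brT br).

Inductive span (G : tilde L -> Prop) : tilde L -> Prop :=
| span0 : span G (zeroT L)
| spanG x : G x -> span G x
| spanD x y : span G x -> span G y -> span G (addT x y)
| spanZ a x : span G x -> span G (scaleT a x).

Lemma span_map (phi : tilde L -> tilde L) (G G' : tilde L -> Prop) :
  phi (zeroT L) = zeroT L ->
  (forall x y, phi (addT x y) = addT (phi x) (phi y)) ->
  (forall a x, phi (scaleT a x) = scaleT a (phi x)) ->
  (forall x, G x -> span G' (phi x)) ->
  forall x, span G x -> span G' (phi x).
Proof.
move=> phi0 phiD phiZ phiG x; elim => [|y /phiG //|y z _ Hy _ Hz|a y _ Hy].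
- by rewrite phi0; exact: span0.
- by rewrite phiD; exact: spanD.
- by rewrite phiZ; exact: spanZ.
Qed.

Lemma span_sub (G G' : tilde L -> Prop) :
  (forall x, G x -> G' x) -> forall x, span G x -> span G' x.
Proof. by move=> sub; apply: (@span_map id) => // y /sub; exact: spanG. Qed.

Variables (m : nat) (b : 'I_m -> tilde L) (c : tilde L).

Fixpoint brc_at (u : seq 'I_m) (k : nat) : seq (tilde L) :=
  match u with
  | [::] => [::]
  | x :: u' => if k is k'.+1 then b x :: brc_at u' k' else brT (b x) c :: map b u'
  end.

Lemma brc_at_rcons u x k : (k < size u)%N ->
  brc_at (rcons u x) k = rcons (brc_at u k) (b x).
Proof. by elim: u k => [|y u IH] [|k] //= hk; rewrite ?map_rcons ?IH. Qed.

Lemma brc_at_rcons_size u x : brc_at (rcons u x) (size u) = rcons (map b u) (brT (b x) c).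
Proof. by elim: u => [|y u IH] //=; rewrite IH. Qed.

Lemma brc_at_cat u1 u2 k : (k < size u1)%N -> brc_at (u1 ++ u2) k = brc_at u1 k ++ map b u2.
Proof. by elim: u1 k => [|y u IH] [|k] //= hk; rewrite ?map_cat ?IH. Qed.

Definition inner_gen (z : tilde L) (u : seq 'I_m) (y : tilde L) : Prop :=
  exists u' k, [/\ perm_eq u' u, (k < size u')%N & y = lcomm brT z (brc_at u' k)].

Lemma span_inner_gen_perm z u v y :
  perm_eq u v -> span (inner_gen z u) y -> span (inner_gen z v) y.
Proof.
move=> huv; apply: span_sub => {}y [u' [k [hu' hk ->]]].
by exists u', k; split => //; exact: perm_trans huv.
Qed.

Lemma span_inner_gen_brT z u x y : span (inner_gen z u) y ->
  span (inner_gen z (rcons u x)) (brT y (b x)).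
Proof.
apply: (@span_map (fun y => brT y (b x))).
- exact: (brT0l lieL).
- by move=> ? ?; rewrite (brTDl lieL).
- by move=> ? ?; rewrite (brTZl lieL).
move=> y' [u' [k [hu' hk ->]]]; apply: spanG.
exists (rcons u' x), k; split.
- by rewrite -!cats1 perm_cat2r.
- by rewrite size_rcons ltnS ltnW.
- by rewrite brc_at_rcons // lcomm_rcons.
Qed.

Lemma span_inner_gen_brT_lcomm_c z u : (0 < size u)%N ->
  span (inner_gen z u) (brT z (lcomm brT c (map b u))).
Proof.
elim/last_ind: u z => [|u x IH] z // _.
rewrite map_rcons lcomm_rcons.
have [-> | u_gt0] : u = [::] \/ (0 < size u)%N by case: u {IH} => [|? ?]; [left|right].
  by rewrite /= (brT_anti lieL c) (brTZr lieL); apply: spanZ; apply: spanG; exists [:: x], 0%N.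
rewrite (brT_jacobi lieL); apply: spanD; first exact/span_inner_gen_brT/IH.
apply: spanZ; apply: (@span_sub (inner_gen (brT z (b x)) u)); last exact: IH.
move=> y [u' [k [hu' hk ->]]]; exists (x :: u'), k.+1; split => //.
by rewrite perm_sym perm_rcons perm_cons perm_sym.
Qed.

Definition c_defect (z : tilde L) (u : seq 'I_m) : tilde L :=
  addT (brT (lcomm brT z (map b u)) c) (scaleT (-1) (lcomm brT (brT z c) (map b u))).

Lemma span_inner_gen_c_defect z u : span (inner_gen z u) (c_defect z u).
Proof.
elim/last_ind: u z => [|u x IH] z.
  have -> : c_defect z [::] = zeroT L.
    by apply: functional_extensionality => S; rewrite /c_defect /addT /scaleT scaleN1r addrN.
  exact: span0.
have -> : c_defect z (rcons u x) =
    addT (brT (lcomm brT z (map b u)) (brT (b x) c)) (brT (c_defect z u) (b x)).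
  rewrite /c_defect !map_rcons !lcomm_rcons (brTDl lieL) (brTZl lieL) (brT_jacobi lieL).
  by apply: functional_extensionality => S; rewrite /addT /scaleT !scaleN1r addrA subrK.
apply: spanD; last exact: span_inner_gen_brT.
apply: spanG; exists (rcons u x), (size u); split => //.
- by rewrite size_rcons.
- by rewrite brc_at_rcons_size lcomm_rcons.
Qed.

Lemma span_inner_gen_lcomm_c u1 u2 a : (0 < size u1)%N ->
  span (inner_gen a (u1 ++ u2)) (lcomm brT c (map b u1 ++ a :: map b u2)).
Proof.
move=> u1_gt0; rewrite lcomm_cat /= (brT_anti lieL) (lcomm_brTZl lieL); apply: spanZ.
apply: (@span_map (fun y => lcomm brT y (map b u2)) (inner_gen a u1)).
- exact: (lcomm_brT0l lieL).
- by move=> ? ?; rewrite (lcomm_brTDl lieL).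
- by move=> ? ?; rewrite (lcomm_brTZl lieL).
- move=> y [u' [k [hu' hk ->]]]; apply: spanG; exists (u' ++ u2), k; split.
  + by rewrite perm_cat2r.
  + by rewrite size_cat (leq_trans hk) ?leq_addr.
  + by rewrite brc_at_cat // lcomm_cat.
exact: span_inner_gen_brT_lcomm_c.
Qed.
End InnerSpan.

Section InnerComb.
Variables (F : fieldType) (L : lmodType F) (br : L -> L -> L).
Variables (m : nat) (a : tilde L) (b : 'I_m -> tilde L) (c : tilde L).

Definition inner_comb (x : tilde L) : Prop :=
  exists gamma : 'S_m -> 'I_m -> F, forall S,
    x S = \sum_(t : 'S_m) \sum_(k : 'I_m) gamma t k *: inner_term br a b c t k S.

Lemma inner_comb_ext x y : (forall S, x S = y S) -> inner_comb y -> inner_comb x.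
Proof. by move=> exy [g hg]; exists g => S; rewrite exy hg. Qed.

Lemma inner_comb0 : inner_comb (zeroT L).
Proof.
exists (fun _ _ => 0) => S; rewrite /zeroT big1 // => t _.
by rewrite big1 // => k _; rewrite scale0r.
Qed.

Lemma inner_combD x y : inner_comb x -> inner_comb y -> inner_comb (addT x y).
Proof.
move=> [g1 h1] [g2 h2]; exists (fun t k => g1 t k + g2 t k) => S.
rewrite /addT h1 h2 -big_split; apply: eq_bigr => t _.
by rewrite -big_split; apply: eq_bigr => k _; rewrite scalerDl.
Qed.

Lemma inner_combZ e x : inner_comb x -> inner_comb (scaleT e x).
Proof.
move=> [g h]; exists (fun t k => e * g t k) => S.
rewrite /scaleT h scaler_sumr; apply: eq_bigr => t _.
by rewrite scaler_sumr; apply: eq_bigr => k _; rewrite scalerA.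
Qed.

Lemma inner_comb_sum (I : Type) (r : seq I) (P : pred I) (coef : I -> F) (g : I -> tilde L) :
  (forall i, P i -> inner_comb (g i)) ->
  inner_comb (fun S => \sum_(i <- r | P i) coef i *: g i S).
Proof.
move=> hg; elim: r => [|i r IH].
  by apply: (inner_comb_ext _ inner_comb0) => S; rewrite big_nil.
case hP: (P i).
  apply: (inner_comb_ext _ (inner_combD (inner_combZ (coef i) (hg i hP)) IH)) => S.
  by rewrite big_cons hP.
by apply: (inner_comb_ext _ IH) => S; rewrite big_cons hP.
Qed.

Lemma brc_at_zip (u : seq 'I_m) k d :
  [seq (if p.1 == (k + d)%N then brT br (b p.2) c else b p.2) | p <- zip (iota d (size u)) u]
  = brc_at br b c u k.
Proof.
have past e (v : seq 'I_m) d' : (e < d')%N ->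
    [seq (if p.1 == e then brT br (b p.2) c else b p.2) | p <- zip (iota d' (size v)) v]
    = map b v.
  by elim: v d' => //= x v IH d' he; rewrite (gtn_eqF he) IH // ltnW.
elim: u k d => [|x u IH] [|k] d //=.
  by rewrite add0n eqxx past.
by rewrite -{1}(add0n d) eqn_add2r addSnnS IH.
Qed.

Lemma inner_comb_gen y : inner_gen br b c a (enum 'I_m) y -> inner_comb y.
Proof.
move=> [u [k [hu hk ->]]].
have hsz : size u == m by rewrite (perm_size hu) size_enum_ord.
pose tu := Tuple hsz.
have inj : injective (tnth tu).
  move=> i j; rewrite (tnth_nth i) (tnth_nth i) /= => /eqP.
  by rewrite nth_uniq ?(eqP hsz) ?(perm_uniq hu) ?enum_uniq // => /eqP /val_inj.
pose t := perm inj.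
have ht : [seq t i | i <- enum 'I_m] = u.
  by rewrite -[RHS](map_tnth_enum tu); apply: eq_map => i; rewrite permE.
have hkm : (k < m)%N by rewrite -(eqP hsz).
pose k' := Ordinal hkm.
exists (fun t0 k0 => ((t0 == t) && (k0 == k'))%:R) => S.
rewrite (bigD1 t) //= [X in _ + X]big1 ?addr0; last first.
  by move=> t0 /negbTE ->; apply: big1 => k0 _; rewrite /= scale0r.
rewrite (bigD1 k') //= [X in _ + X]big1 ?addr0; last first.
  by move=> k0 /negbTE ->; rewrite andbF scale0r.
rewrite !eqxx scale1r /inner_term -ht -(brc_at_zip _ _ 0) addn0 size_map size_enum_ord.
rewrite -val_enum_ord zip_map.
apply: (congr1 (fun l => lcomm (brT br) a l S)).
by elim: (enum 'I_m) => //= i l ->.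
Qed.

Lemma inner_comb_span y : span (inner_gen br b c a (enum 'I_m)) y -> inner_comb y.
Proof.
elim => [|x /inner_comb_gen //|x z _ hx _ hz|e x _ hx].
- exact: inner_comb0.
- exact: inner_combD.
- exact: inner_combZ.
Qed.
End InnerComb.

Section Words.
Variables (F : fieldType) (L : lmodType F) (m : nat).
Variables (a : tilde L) (b : 'I_m -> tilde L).

Definition xab (j : 'I_(m.+1)) : tilde L :=
  if unlift ord0 j is Some i then b i else a.

Definition unlift0_word (s : 'S_(m.+1)) : seq 'I_m :=
  pmap (unlift ord0) [seq s i | i <- enum 'I_(m.+1)].

Lemma perm_unlift0_word s : perm_eq (unlift0_word s) (enum 'I_m).
Proof.
have -> : enum 'I_m = pmap (unlift ord0) (enum 'I_(m.+1)).
  by rewrite enum_ordSl /= unlift_none (map_pK (@liftK _ ord0)).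
exact/perm_pmap/perm_map_enum.
Qed.

Section AgreeOff0.
Variable g : 'I_(m.+1) -> tilde L.
Hypothesis g_off0 : forall j i, unlift ord0 j = Some i -> g j = b i.

Lemma map_off0 (l : seq 'I_(m.+1)) : ord0 \notin l -> map g l = map b (pmap (unlift ord0) l).
Proof.
elim: l => //= j l IH; rewrite in_cons negb_or => /andP [hj hl].
by have [i _ hu] := unlift_some hj; rewrite hu /= (g_off0 hu) IH.
Qed.

Lemma map_fix0 (s : 'S_(m.+1)) : s ord0 = ord0 ->
  [seq g (s (lift ord0 i)) | i <- enum 'I_m] = map b (unlift0_word s).
Proof.
move=> s0; rewrite /unlift0_word enum_ordSl /= s0 unlift_none.
have -> : [seq g (s (lift ord0 i)) | i <- enum 'I_m] =
    map g [seq s i | i <- map (lift ord0) (enum 'I_m)] by rewrite -!map_comp.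
apply: map_off0; apply/mapP => -[j /mapP [i _ ->]].
by rewrite -{1}s0 => /perm_inj /eqP; rewrite (negbTE (neq_lift _ _)).
Qed.
End AgreeOff0.

Lemma xab0 : xab ord0 = a.
Proof. by rewrite /xab unlift_none. Qed.

Lemma xab_off0 j i : unlift ord0 j = Some i -> xab j = b i.
Proof. by rewrite /xab => ->. Qed.

Lemma xab_word_split (s : 'S_(m.+1)) : s ord0 != ord0 ->
  exists u1 u2, [/\ (0 < size u1)%N, perm_eq (u1 ++ u2) (enum 'I_m) &
    [seq xab (s i) | i <- enum 'I_(m.+1)] = map b u1 ++ a :: map b u2].
Proof.
move=> s0; set js := [seq s i | i <- enum 'I_(m.+1)].
have js_uniq : uniq js by rewrite (perm_uniq (perm_map_enum s)) enum_uniq.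
have js0 : ord0 \in js by rewrite (perm_mem (perm_map_enum s)) mem_enum.
set t := take (index ord0 js) js; set d := drop (index ord0 js).+1 js.
have js_split : js = t ++ ord0 :: d.
  by rewrite -{1}(cat_take_drop (index ord0 js) js) (drop_nth ord0) ?index_mem ?nth_index.
have [t0 d0] : ord0 \notin t /\ ord0 \notin d.
  move: js_uniq; rewrite js_split cat_uniq /= => /and3P [_ hh /andP [hd _]]; split => //.
  by move: hh; apply: contra => h; rewrite h.
exists (pmap (unlift ord0) t), (pmap (unlift ord0) d); split.
- have s0' : ord0 != s ord0 by rewrite eq_sym.
  have [i _ si] := unlift_some s0'.
  by rewrite /t /js enum_ordSl /= (negbTE s0) /= si.
- rewrite -pmap_cat.
  have -> : pmap (unlift ord0) (t ++ d) = unlift0_word s.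
    by rewrite /unlift0_word -/js [in RHS]js_split !pmap_cat /= unlift_none.
  exact: perm_unlift0_word.
- have -> : [seq xab (s i) | i <- enum 'I_(m.+1)] = map xab js.
    by rewrite /js; elim: (enum _) => //= ? ? ->.
  rewrite js_split map_cat /= (map_off0 xab_off0 t0) (map_off0 xab_off0 d0).
  by rewrite xab0.
Qed.
End Words.

Section BracketF1.
Variables (F : fieldType) (L : lmodType F) (br : L -> L -> L).
Hypothesis lieL : is_lie br.
Variables (m : nat) (alpha : 'S_(m.+1) -> F).
Hypothesis f_id : forall (x0 : L) (x : 'I_(m.+1) -> L), fpoly br alpha x0 x = 0.
Variables (a : tilde L) (b : 'I_m -> tilde L) (c : tilde L).
Local Notation brT := (brT br).
Local Notation xab := (xab a b).
Local Notation word s := (map b (unlift0_word s)).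

Lemma fpoly_tilde_c_xab S :
  \sum_(s : 'S_(m.+1) | s ord0 == ord0) alpha s *: lcomm brT (brT a c) (word s) S =
  \sum_(s : 'S_(m.+1) | s ord0 != ord0) alpha s *:
    lcomm brT c [seq xab (s i) | i <- enum 'I_(m.+1)] S.
Proof.
have := fpoly_tilde lieL f_id c xab S.
rewrite (bigID (fun s : 'S_(m.+1) => s ord0 == ord0)) /= addrC => /eqP.
rewrite addr_eq0 => /eqP ->; rewrite -sumrN; apply: eq_bigr => s /eqP s0.
rewrite enum_ordSl /= s0 xab0 (brT_anti lieL c a) (lcomm_brTZl lieL).
rewrite /scaleT scaleN1r scalerN opprK -(map_fix0 (@xab_off0 _ _ _ a b) s0).
by congr (_ *: lcomm _ _ _ S); rewrite -map_comp.
Qed.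

Lemma brT_f1T_decompose S :
  brT (f1T br alpha a b) c S =
  \sum_(s : 'S_(m.+1) | s ord0 != ord0) alpha s *:
    lcomm brT c [seq xab (s i) | i <- enum 'I_(m.+1)] S +
  \sum_(s : 'S_(m.+1) | s ord0 == ord0) alpha s *: c_defect br b c a (unlift0_word s) S.
Proof.
have extb_off0 j i : unlift ord0 j = Some i -> extb b j = b i by rewrite /extb => ->.
rewrite /f1T (brT_suml lieL) big_addT_apply -fpoly_tilde_c_xab -big_split /=.
apply: eq_bigr => s /eqP s0; rewrite (brTZl lieL) /scaleT (map_fix0 extb_off0 s0).
by rewrite -scalerDr /c_defect /addT /scaleT scaleN1r addrC subrK.
Qed.

Lemma inner_comb_brT_f1T : inner_comb br a b c (brT (f1T br alpha a b) c).
Proof.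
apply: inner_comb_ext brT_f1T_decompose _.
apply: inner_combD; apply: inner_comb_sum => s hs.
  have [u1 [u2 [u1_gt0 hu ->]]] := xab_word_split a b hs.
  apply/inner_comb_span/(span_inner_gen_perm hu).
  exact: span_inner_gen_lcomm_c.
apply/inner_comb_span/(span_inner_gen_perm (perm_unlift0_word s)).
exact: span_inner_gen_c_defect.
Qed.
End BracketF1.

Theorem lemma27 (F : fieldType) (L : lmodType F) (br : L -> L -> L) (m : nat)
  (alpha : 'S_(m.+1) -> F) :
  is_lie br ->
  alpha 1%g = 1 ->
  (forall (x0 : L) (x : 'I_(m.+1) -> L), fpoly br alpha x0 x = 0) ->
  no_identity_below br m.+2 ->
  forall (a : tilde L) (b : 'I_m -> tilde L) (c : tilde L),
    in_tilde a -> (forall i, in_tilde (b i)) -> in_tilde c ->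
    exists gamma : 'S_m -> 'I_m -> F,
      forall S : {fset nat},
        brT br (f1T br alpha a b) c S =
        \sum_(t : 'S_m) \sum_(k : 'I_m) gamma t k *: inner_term br a b c t k S.
Proof.
move=> lieL _ f_id _ a b c _ _ _.
exact: inner_comb_brT_f1T.
Qed.
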